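(* Let $s,k,T\in\mathbb{N}$ and let $\mathcal{D}$ be a distribution on $\{0,1\}^T$. Then \[ \mathbf{S}^{s,k}[\mathcal{D}]\le \Pr_{w\sim\mathcal{D}}[\text{slot } s \text{ is not } k\text{-settled for } w]. \]
   Context: Characteristic strings and forks. A characteristic string is $w=w_1\dots w_n\in\{0,1\}^n$; index $i$ is honest if $w_i=0$ and adversarial if $w_i=1$. A fork for $w$ is a rooted tree $F=(V,E)$ with edges directed away from the root $r$, together with a labeling $\ell:V\to\{0,\dots,n\}$, such that (F1) $\ell(r)=0$; (F2) labels strictly increase along every directed path; (F3) every honest index is the label of exactly one vertex; (F4) if $i<j$ are honest indices then the vertex labeled $i$ has strictly smaller depth than the vertex labeled $j$. Write $F\vdash w$. A tine is a directed path starting at the root; its length is its number of edges. For $x$ a prefix of $w$, $F\vdash x$, $F'\vdash w$, $F\sqsubseteq F'$ means $F$ is a subgraph of $F'$ with identical labels. Settlement. For $w\in\{0,1\}^n$ and a fork $F\vdash w_1\dots w_t$ with $s+k\le t\le n$, slot $s$ is not $k$-settled in $F$ if $F$ contains two tines of maximum length which either contain different vertices labeled $s$, or one contains a vertex labeled $s$ and the other does not; otherwise it is $k$-settled in $F$. Slot $s$ is $k$-settled for $w$ if it is $k$-settled in every fork $F\vdash w_1\dots w_t$ for every $t\ge s+k$. Settlement game. For a distribution $\mathcal{D}$ on $\{0,1\}^T$, the $(\mathcal{D},T;s,k)$-settlement game between an adversary $\mathcal{A}$ and a deterministic challenger: (1) $w\in\{0,1\}^T$ is drawn from $\mathcal{D}$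 and given to $\mathcal{A}$; (2) $A_0$ is the single-vertex fork for the empty string; (3) for $t=1,\dots,T$: (a) if $w_t=0$, the challenger forms $F_t\vdash w_1\dots w_t$ by adding one vertex labeled $t$ to the end of a longest path of $A_{t-1}$ (ties broken by $\mathcal{A}$); (b) if $w_t=1$, $\mathcal{A}$ chooses an arbitrary fork $F_t\vdash w_1\dots w_t$ with $A_{t-1}\sqsubseteq F_t$; (c) $\mathcal{A}$ chooses an arbitrary fork $A_t\vdash w_1\dots w_t$ with $F_t\sqsubseteq A_t$. $\mathcal{A}$ wins if slot $s$ is not $k$-settled in some $A_t$ with $t\ge s+k$. $\mathbf{S}^{s,k}[\mathcal{D}]=\max_{\mathcal{A}}\Pr[\mathcal{A}\text{ wins}]$. *)

From HB Require Import structures.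
From mathcomp Require Import all_boot all_order all_algebra.
From mathcomp Require Import boolp.
Set Implicit Arguments. Unset Strict Implicit. Unset Printing Implicit Defensive.
Import Order.TTheory GRing.Theory Num.Theory.

(* Characteristic strings: seq bool, index i (1-based) is adversarial iff
   the i-th bit is [true] (w_i = 1), honest iff [false] (w_i = 0). *)
Definition wbit (w : seq bool) (i : nat) : bool := nth false w i.-1.

(* Vertices are natural-number identifiers listed in
   [fverts]; every non-root vertex v has the unique incoming edge
   (fpar v, v); [flab] is the labelling.  Values of [fpar]/[flab] outside
   [fverts] are irrelevant. *)
Record fork := Fork {
  fverts : seq nat;
  froot : nat;
  fpar : nat -> nat;
  flab : nat -> nat }.

Fixpoint path_up (F : fork) (fuel v : nat) : seq nat :=
  if v == froot F then [:: v] else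
  match fuel with
  | 0 => [:: v]
  | f.+1 => v :: path_up F f (fpar F v)
  end.

Definition tine (F : fork) (v : nat) : seq nat := path_up F (size (fverts F)) v.

Definition depth (F : fork) (v : nat) : nat := (size (tine F v)).-1.

Definition height (F : fork) : nat := \max_(v <- fverts F) depth F v.

Definition is_rooted_tree (F : fork) : Prop :=
  [/\ uniq (fverts F), froot F \in fverts F,
      (forall v, v \in fverts F -> v != froot F -> fpar F v \in fverts F) &
      (forall v, v \in fverts F -> froot F \in tine F v)].

Definition is_fork (w : seq bool) (F : fork) : Prop :=
  is_rooted_tree F /\
  [/\
      (forall v, v \in fverts F -> flab F v <= size w),
      flab F (froot F) = 0,
      (forall v, v \in fverts F -> v != froot F -> flab F (fpar F v) < flab F v),
      (forall i, 1 <= i <= size w -> wbit w i = false ->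
         count (fun v => flab F v == i) (fverts F) = 1) &
      (forall i j u u', 1 <= i -> i < j -> j <= size w ->
         wbit w i = false -> wbit w j = false ->
         u \in fverts F -> u' \in fverts F -> flab F u = i -> flab F u' = j ->
         depth F u < depth F u')].

Definition subfork (F F' : fork) : Prop :=
  [/\ {subset fverts F <= fverts F'},
      froot F = froot F',
      (forall v, v \in fverts F -> v != froot F -> fpar F' v = fpar F v) &
      (forall v, v \in fverts F -> flab F' v = flab F v)].

Definition max_tine (F : fork) (t : nat) : Prop :=
  t \in fverts F /\ depth F t = height F.

Definition tine_has_label (F : fork) (t s : nat) : Prop :=
  exists2 u, u \in tine F t & flab F u = s.

(* slot s is not k-settled in F (the range condition s + k <= t <= n is
   imposed where this notion is used) *)
Definition not_settled_in (F : fork) (s : nat) : Prop :=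
  exists t1 t2, [/\ max_tine F t1, max_tine F t2 &
    (exists u1 u2, [/\ u1 \in tine F t1, u2 \in tine F t2,
                       flab F u1 = s, flab F u2 = s & u1 <> u2])
    \/ (tine_has_label F t1 s /\ ~ tine_has_label F t2 s)].

Definition k_settled (s k : nat) (w : seq bool) : Prop :=
  forall t, s + k <= t <= size w ->
    forall F, is_fork (take t w) F -> ~ not_settled_in F s.

Definition fork0 : fork := Fork [:: 0] 0 (fun _ => 0) (fun _ => 0).

Definition extend (F : fork) (v t : nat) : fork :=
  let x := (foldr maxn (froot F) (fverts F)).+1 in
  Fork (rcons (fverts F) x) (froot F)
       (fun y => if y == x then v else fpar F y)
       (fun y => if y == x then t else flab F y).

(* A (deterministic) adversary; it knows w.  At step t it sees w, t and the
   current fork:  [adv_tie] picks the endpoint of the longest tine to be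
   extended by the challenger (tie breaking), [adv_F] picks F_t when w_t = 1,
   [adv_A] picks A_t from F_t. *)
Record adversary := Adversary {
  adv_tie : seq bool -> nat -> fork -> nat;
  adv_F : seq bool -> nat -> fork -> fork;
  adv_A : seq bool -> nat -> fork -> fork }.

Definition F_of (adv : adversary) (w : seq bool) (t : nat) (Aprev : fork) : fork :=
  if wbit w t then adv_F adv w t Aprev
  else extend Aprev (adv_tie adv w t Aprev) t.

Fixpoint A_seq (adv : adversary) (w : seq bool) (t : nat) : fork :=
  match t with
  | 0 => fork0
  | t'.+1 => adv_A adv w t (F_of adv w t (A_seq adv w t'))
  end.

Definition legal_step (adv : adversary) (w : seq bool) (t : nat) : Prop :=
  let Ap := A_seq adv w t.-1 in
  let F := F_of adv w t Ap in
  let A := A_seq adv w t in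
  [/\ (if wbit w t then is_fork (take t w) F /\ subfork Ap F
       else max_tine Ap (adv_tie adv w t Ap)),
      is_fork (take t w) A & subfork F A].

(* adversary wins the (D,T;s,k)-settlement game on w (a play with an illegal
   move is not a play of the game; it is counted as a loss) *)
Definition wins (s k T : nat) (adv : adversary) (w : seq bool) : Prop :=
  (forall t, 1 <= t <= T -> legal_step adv w t) /\
  exists t, s + k <= t <= T /\ not_settled_in (A_seq adv w t) s.

Definition Pr (R : realFieldType) (T : nat) (D : {ffun T.-tuple bool -> R})
  (E : seq bool -> Prop) : R :=
  (\sum_(w : T.-tuple bool | `[< E (tval w) >]) D w)%R.

Definition is_distribution (R : realFieldType) (T : nat)
  (D : {ffun T.-tuple bool -> R}) : Prop :=
  (forall w, 0 <= D w)%R /\ (\sum_(w : T.-tuple bool) D w = 1)%R.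

From mathcomp Require Import all_boot all_order all_algebra.
From mathcomp Require Import boolp.
Set Implicit Arguments. Unset Strict Implicit. Unset Printing Implicit Defensive.
Import Order.TTheory GRing.Theory Num.Theory.

(* Every A_t of a legal play is a fork for w_1 ... w_t, so a win at time
   t >= s + k exhibits a fork witnessing that slot s is not k-settled for w;
   hence the winning event is contained in the event "s is not k-settled". *)

Lemma Pr_subset (R : realFieldType) (T : nat) (D : {ffun T.-tuple bool -> R})
  (E1 E2 : seq bool -> Prop) :
  (forall w, 0 <= D w)%R -> (forall w : T.-tuple bool, E1 w -> E2 w) ->
  (Pr D E1 <= Pr D E2)%R.
Proof.
move=> D_ge0 E12; rewrite /Pr.
rewrite [X in (X <= _)%R]big_mkcond [X in (_ <= X)%R]big_mkcond /=.
apply: ler_sum => w _.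
case: (asboolP (E1 w)) => [/E12/asboolT -> // | _].
by case: ifP => _; rewrite ?D_ge0.
Qed.

Lemma is_fork_fork0 : is_fork [::] fork0.
Proof.
split.
  split => // v /=; rewrite inE => /eqP ->.
  by rewrite /tine /= inE.
split => //.
- by move=> v; rewrite inE => /eqP ->.
- by move=> i /andP [i_ge1 /(leq_trans i_ge1)].
- by move=> i j u u' _ lt_ij /(leq_trans lt_ij).
Qed.

Lemma A_seq_is_fork (adv : adversary) (w : seq bool) (T t : nat) :
  (forall t, 1 <= t <= T -> legal_step adv w t) -> t <= T ->
  is_fork (take t w) (A_seq adv w t).
Proof.
move=> legal; case: t => [_ | t le_tT].
  by rewrite take0; exact: is_fork_fork0.
by case: (legal t.+1 le_tT).
Qed.

Lemma wins_not_k_settled (s k T : nat) (adv : adversary) (w : seq bool) :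
  size w = T -> wins s k T adv w -> ~ k_settled s k w.
Proof.
move=> size_w [legal [t [/andP [le_skt le_tT] unsettled]]] settled.
have le_t_size : s + k <= t <= size w by rewrite le_skt size_w.
exact: (settled t le_t_size _ (A_seq_is_fork legal le_tT)) unsettled.
Qed.

Theorem lemma1 (R : realFieldType) (s k T : nat)
  (D : {ffun T.-tuple bool -> R}) (HD : is_distribution D)
  (adv : adversary) :
  (Pr D (wins s k T adv) <= Pr D (fun w => ~ k_settled s k w))%R.
Proof.
case: HD => D_ge0 _; apply: Pr_subset => // w.
exact: wins_not_k_settled (size_tuple w).
Qed.
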